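(* For all $n\ge 2$, \[\left|\mathrm{Av}_n[\overline{12}34]\right|=\left|\mathrm{Av}_n[\overline{12}43]\right|=1+\sum_{i=0}^{n-2} i\,(i+1)^{n-i-2}.\]
   Context: For $\sigma\in S_n$, the cyclic permutation $[\sigma]$ is the set of all rotations of $\sigma$; $[S_n]$ is the set of cyclic permutations of length $n$. A vincular pattern is a permutation $\pi\in S_k$ with some pairs of adjacent positions joined by an overline; a linear permutation $\tau$ contains it if $\tau$ has a subsequence order-isomorphic to $\pi$ whose entries corresponding to overlined adjacent positions are adjacent in $\tau$. $[\sigma]$ contains $[\pi]$ if some rotation of $\sigma$ contains $\pi$. For example $[\overline{12}34]$ is contained in $[\sigma]$ iff some rotation of $\sigma$ has entries $a,b,c,d$ in this order with $a,b$ adjacent and $a<b<c<d$. $\mathrm{Av}_n[\pi]$ is the set of $[\sigma]\in[S_n]$ avoiding $[\pi]$. *)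

From HB Require Import structures.
From mathcomp Require Import all_boot all_fingroup.
Set Implicit Arguments. Unset Strict Implicit. Unset Printing Implicit Defensive.
Local Open Scope group_scope.

(* Linear permutations of length n are elements of 'S_n (one-line notation
   sigma(0) ... sigma(n-1), positions and values 0-based). *)

Definition cshift (n : nat) : 'S_n := perm (@ordS_inj n).

(* rotation of sigma by k: position j holds sigma((j+k) mod n).
   In mathcomp, (s * t) x = t (s x). *)
Definition rotp (n k : nat) (s : 'S_n) : 'S_n := (cshift n ^+ k) * s.

Definition cyc (n : nat) (s : 'S_n) : {set 'S_n} := [set rotp k s | k : 'I_n].

(* A vincular pattern: a permutation p in S_k, together with a predicate
   adj on positions: adj j means positions j and j+1 are overlined (joined). *)
Definition vcontains (n k : nat) (tau : 'S_n) (p : 'S_k) (adj : pred nat) : bool :=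
  [exists f : {ffun 'I_k -> 'I_n},
    [&& [forall a : 'I_k, forall b : 'I_k, (a < b)%N ==> (f a < f b)%N],
        [forall a : 'I_k, forall b : 'I_k, (p a < p b)%N == (tau (f a) < tau (f b))%N] &
        [forall a : 'I_k, forall b : 'I_k,
           (adj a && (b == a.+1 :> nat)) ==> (f b == (f a).+1 :> nat)]]].

Definition cyc_contains (n k : nat) (s : 'S_n) (p : 'S_k) (adj : pred nat) : bool :=
  [exists r : 'I_n, vcontains (rotp r s) p adj].

Definition cycAv (n k : nat) (p : 'S_k) (adj : pred nat) : {set {set 'S_n}} :=
  [set cyc s | s in [set s : 'S_n | ~~ cyc_contains s p adj]].

(* The patterns  12̄34  (p = 1234) and 12̄43 (p = 1243), 0-based, with
   positions 0 and 1 joined. *)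
Definition p1234 : 'S_4 := 1.
Definition p1243 : 'S_4 := tperm (inord 2 : 'I_4) (inord 3).
Definition adj12 : pred nat := pred1 0.

From mathcomp Require Import all_boot all_fingroup.
From mathcomp Require Import zify.
Set Implicit Arguments. Unset Strict Implicit. Unset Printing Implicit Defensive.

(* Write a permutation in complemented one-line notation, so that its maximum becomes
   the letter 0, and read it cyclically.  An occurrence of [12̄34] (resp. [12̄43]) then is a
   cyclic descent a > b followed, reading on from b, by two letters c, d smaller than b
   with c > d (resp. c < d).  Call b a slot of the word when the letters smaller than b,
   read cyclically from b, increase (resp. decrease): the cyclic class avoids the pattern
   iff every descent bottom is a slot.  Inserting a new largest letter just before b
   preserves avoidance iff b is a slot; the new word is cyclically sorted iff the old one
   read from b is sorted, in which case it gains one slot, and otherwise the number of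
   slots is unchanged.  Hence each size has exactly one cyclically sorted avoider, and the
   number N(n, k) of unsorted avoiders of size n with k slots satisfies
   N(n+1, k) = k N(n, k) + [k = n] (n - 1), so N(n, k) = (k - 1) k^(n-1-k); summing over k
   gives the formula. *)

(** * Sequences read cyclically *)

Section Rotations.
Variable T : eqType.
Implicit Types (s : seq T) (x b : T).

Lemma nth_rot x0 s r j : r <= size s -> j < size s ->
  nth x0 (rot r s) j = nth x0 s (if j < size s - r then j + r else j - (size s - r)).
Proof.
move=> rs js; rewrite /rot nth_cat size_drop.
by case: ltnP => h; [rewrite nth_drop addnC | rewrite nth_take //; lia].
Qed.

Lemma nth_rot_lt x0 s r j : j + r < size s -> nth x0 (rot r s) j = nth x0 s (j + r).
Proof.
move=> h; rewrite /rot nth_cat size_drop (_ : j < size s - r) ?nth_drop 1?addnC //; lia.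
Qed.

Definition start_at x s := rot (index x s) s.

Lemma start_at_head x s : x \in s ->
  start_at x s = x :: (drop (index x s).+1 s ++ take (index x s) s).
Proof. exact: rot_index. Qed.

Lemma mem_start_at x s : start_at x s =i s.
Proof. exact: mem_rot. Qed.

Lemma rot_head_start_at x0 s k x : uniq s -> k <= size s -> x \in s ->
  nth x0 (rot k s) 0 = x -> rot k s = start_at x s.
Proof.
move=> us ks xs; rewrite /start_at.
have [-> | ltks] := eqVneq k (size s).
  by rewrite rot_size nth0 => hx; rewrite -hx -nth0 index_uniq ?rot0 //; case: (s) xs.
have {}ks : k < size s by rewrite ltn_neqAle ltks.
rewrite nth_rot ?(ltnW ks) ?(leq_ltn_trans _ ks) // subn_gt0 ks add0n => <-.
by rewrite index_uniq.
Qed.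

Lemma start_at_rot s r x : uniq s -> x \in s -> start_at x (rot r s) = start_at x s.
Proof.
move=> us xs; rewrite [rot r s]rot_minn {1}/start_at rot_rot_add.
apply: (rot_head_start_at (x0 := x)) => //; first exact: leq_rot_add.
by rewrite -rot_rot_add -/(start_at _ _) start_at_head ?mem_rot.
Qed.

(* When [b] heads [s], [x] goes to the end rather than to the front: the same cyclic word,
   but the head of [s] is kept. *)
Definition insert_before x b s :=
  let i := index b s in if i == 0 then rcons s x else take i s ++ x :: drop i s.

Lemma insert_beforeE x b s : b \in s ->
  exists2 k, k <= size (x :: start_at b s) & insert_before x b s = rot k (x :: start_at b s).
Proof.
move=> bs; rewrite /insert_before /start_at; case: eqP => [-> | _].
  by exists 1; rewrite ?rot0 ?rot1_cons.
exists (size (x :: drop (index b s) s)); first by rewrite /= ltnS size_cat leq_addr.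
by rewrite -cat_cons rot_size_cat.
Qed.

Lemma filter_insert_before x b s : x \notin s -> filter (predC1 x) (insert_before x b s) = s.
Proof.
move=> xs; have sx : filter (predC1 x) s = s.
  by apply/all_filterP/allP => y ys /=; apply: contraNneq xs => <-.
rewrite /insert_before; case: ifP => _; first by rewrite filter_rcons /= eqxx sx.
by rewrite filter_cat /= eqxx /= -filter_cat cat_take_drop sx.
Qed.

Lemma insert_before_next x s : uniq s -> x \in s -> head x s != x ->
  next s x \in filter (predC1 x) s /\ insert_before x (next s x) (filter (predC1 x) s) = s.
Proof.
move=> us xs; case/splitPr: xs us => A B; case: A => [|a A] us; first by rewrite /= eqxx.
move=> _; have := us; rewrite cat_uniq => /and3P[_ /hasPn xA /andP[xB _]].
have xaA : x \notin a :: A by apply: xA; rewrite mem_head.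
have -> : filter (predC1 x) ((a :: A) ++ x :: B) = (a :: A) ++ B.
  have keep C : x \notin C -> filter (predC1 x) C = C.
    by move=> xC; apply/all_filterP/allP => y yC; apply: contraNneq xC => <-.
  by rewrite filter_cat keep // [filter _ (x :: B)]/= eqxx keep.
have -> : next ((a :: A) ++ x :: B) x = head a B.
  rewrite next_nth mem_cat mem_head orbT index_cat (negbTE xaA) /= eqxx addn0.
  by rewrite nth_cat ltnNge leqnSn /= subSnn; case: (B).
case: B xA xB {us} => [|b B] xA xB /=.
  by rewrite cats0 mem_head /insert_before /= eqxx cats1.
have bA : b \notin a :: A by apply: xA; rewrite !inE eqxx orbT.
rewrite -!cat_cons mem_cat mem_head orbT; split => //.
by rewrite /insert_before index_cat (negbTE bA) /= eqxx addn0 take_size_cat ?drop_size_cat.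
Qed.

Lemma head_insert_before x0 x b s : s != [::] ->
  head x0 (insert_before x b s) = head x0 s.
Proof. by rewrite /insert_before; case: (index b s) => [|i]; case: s. Qed.

Lemma perm_insert_before x b s : b \in s -> perm_eq (insert_before x b s) (x :: s).
Proof.
move=> bs; have [k _ ->] := insert_beforeE x bs.
by rewrite perm_rot perm_cons /start_at perm_rot.
Qed.

End Rotations.

Lemma pairwise_filterE (T : Type) (r : rel T) (a : pred T) (s : seq T) :
  pairwise r (filter a s) = pairwise [rel x y | a x ==> a y ==> r x y] s.
Proof.
elim: s => //= x s IH; case ax: (a x); rewrite /= IH ?all_filter.
  by congr andb; apply: eq_all => y /=; rewrite ax.
by rewrite (@eq_all _ _ predT) ?all_predT // => y /=; rewrite ax.
Qed.

Lemma pairwisePn (T : eqType) (r : rel T) x0 s : ~~ pairwise r s ->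
  exists i j, i < j < size s /\ ~~ r (nth x0 s i) (nth x0 s j).
Proof.
elim: s => //= x s IH; rewrite negb_and => /orP[/allPn[y ys nrxy] | /IH[i [j [ijs nr]]]].
  by exists 0, (index y s).+1; rewrite /= nth_index // ltnS index_mem ys.
by exists i.+1, j.+1.
Qed.

Lemma next_at_indep (T : eqType) (x y0 y0' y : T) s :
  x != last y s -> next_at x y0 y s = next_at x y0' y s.
Proof.
elim: s y => [|y' s IH] y /=; first by move/negbTE->.
by move=> ne; case: (x == y) => //; apply: IH.
Qed.

Lemma next_last (T : eqType) (y : T) s : uniq (y :: s) -> next (y :: s) (last y s) = y.
Proof. by move=> us; rewrite next_nth mem_last index_last // nth_default. Qed.

Lemma next_cons_other (T : eqType) (x y a : T) s : a != x -> a != last y s ->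
  next [:: x, y & s] a = next (y :: s) a.
Proof. by move=> /negbTE ax al; rewrite /= ax; apply: next_at_indep. Qed.

Lemma next_nth_uniq (T : eqType) (x0 : T) s i : uniq s -> i.+1 < size s ->
  next s (nth x0 s i) = nth x0 s i.+1.
Proof.
case: s => [|y s] // us hi.
rewrite next_nth mem_nth ?(ltnW hi) // index_uniq ?(ltnW hi) //=.
by apply: set_nth_default; rewrite /= ltnS in hi.
Qed.

Lemma uniq_flatten_map (S T : eqType) (s : seq S) (t : S -> seq T) (h : T -> S) :
  uniq s -> {in s, forall x, uniq (t x)} -> {in s, forall x, {in t x, forall y, h y = x}} ->
  uniq (flatten (map t s)).
Proof.
elim: s => //= x s IH /andP[xs us] ut ht.
have us' : uniq (flatten (map t s)).
  by apply: IH => // x' x's; [apply: ut | apply: ht]; rewrite inE x's orbT.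
rewrite cat_uniq ut ?mem_head // us' andbT.
apply/hasPn => y /flatten_mapP[x' x's yt']; apply/negP => yt.
have hx : h y = x by apply: ht; rewrite ?mem_head.
have hx' : h y = x' by apply: ht; rewrite ?inE ?x's ?orbT.
by move: xs; rewrite -hx hx' x's.
Qed.

Lemma sumn_count2 (T : Type) (s : seq T) (a b : pred T) x y :
  sumn [seq a w * x + b w * y | w <- s] = count a s * x + count b s * y.
Proof. by elim: s => //= w s ->; rewrite !mulnDl addnACA. Qed.

Lemma count_partition (T : eqType) (s : seq T) (a : pred T) (h : T -> nat) K :
  {in s, forall x, h x < K} -> count a s = \sum_(k < K) count (fun x => a x && (h x == k)) s.
Proof.
elim: s => [|x s IH] hK; first by rewrite big1.
rewrite /= big_split /= -IH => [|y ys]; last by apply: hK; rewrite inE ys orbT.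
congr (_ + _); have hx : h x < K by apply: hK; rewrite mem_head.
rewrite (bigD1 (Ordinal hx)) //= eqxx andbT big1 ?addn0 // => k /negbTE kx.
by rewrite -val_eqE /= eq_sym in kx; rewrite kx andbF.
Qed.

Section PermIota.
Variables (M : nat) (w : seq nat).
Hypothesis pw : perm_eq w (iota 0 M).

Lemma perm_iota_uniq : uniq w.
Proof. by rewrite (perm_uniq pw) iota_uniq. Qed.

Lemma perm_iota_mem x : (x \in w) = (x < M).
Proof. by rewrite (perm_mem pw) mem_iota. Qed.

Lemma perm_iota_size : size w = M.
Proof. by rewrite (perm_size pw) size_iota. Qed.

End PermIota.

Lemma perm_iota_insert_before M b w : perm_eq w (iota 0 M) -> b \in w ->
  perm_eq (insert_before M b w) (iota 0 M.+1).
Proof.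
move=> pw bw; rewrite (permPl (perm_insert_before M bw)) -addn1 iotaD add0n cats1.
by rewrite perm_sym perm_rcons perm_cons perm_sym.
Qed.

(** * The avoidance criterion on complement words *)

(* [up] is [true] for the pattern [12̄34] and [false] for [12̄43]. *)
Definition dirlt (up : bool) : rel nat := fun x y => if up then x < y else y < x.

Section CyclicWords.
Variable up : bool.
Local Notation R := (dirlt up).
Implicit Types (w u v : seq nat) (a b M : nat).

Lemma dirlt_trans : transitive R.
Proof. by rewrite /dirlt; case: up => x y z; lia. Qed.

Lemma dirlt_irr : irreflexive R.
Proof. by rewrite /dirlt; case: up => x; rewrite ltnn. Qed.

Definition sorted_below w b := pairwise R [seq c <- start_at b w | c < b].
Definition avoiding w := all (fun a => (next w a < a) ==> sorted_below w (next w a)) w.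
Definition slots w := count (sorted_below w) w.
Definition sorted_from w b := pairwise R (start_at b w).
Definition cyc_sorted w := has (sorted_from w) w.

(* The complement of an occurrence of the vincular pattern in a linear word: complementing
   turns [12̄34] into [43̄21] and [12̄43] into [43̄12]. *)
Definition lin_occurrence (v : seq nat) : Prop :=
  exists i j l, [/\ i.+1 < j < l, l < size v, nth 0 v i.+1 < nth 0 v i,
    (nth 0 v j < nth 0 v i.+1) && (nth 0 v l < nth 0 v i.+1) & ~~ R (nth 0 v j) (nth 0 v l)].

Lemma sorted_below_rot w r b : uniq w -> b \in w -> sorted_below (rot r w) b = sorted_below w b.
Proof. by move=> uw bw; rewrite /sorted_below start_at_rot. Qed.

Lemma sorted_from_rot w r b : uniq w -> b \in w -> sorted_from (rot r w) b = sorted_from w b.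
Proof. by move=> uw bw; rewrite /sorted_from start_at_rot. Qed.

Lemma avoiding_rot w r : uniq w -> avoiding (rot r w) = avoiding w.
Proof.
move=> uw; rewrite /avoiding (eq_all_r (mem_rot r w)); apply: eq_in_all => a aw.
by rewrite next_rot // sorted_below_rot // mem_next.
Qed.

Lemma slots_rot w r : uniq w -> slots (rot r w) = slots w.
Proof.
move=> uw; rewrite /slots (eq_in_count (a2 := sorted_below w)) => [|b]; last first.
  by rewrite mem_rot => bw; rewrite sorted_below_rot.
by rewrite /rot count_cat addnC -count_cat cat_take_drop.
Qed.

Lemma cyc_sorted_rot w r : uniq w -> cyc_sorted (rot r w) = cyc_sorted w.
Proof.
move=> uw; rewrite /cyc_sorted has_rot; apply: eq_in_has => b bw; exact: sorted_from_rot.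
Qed.

Section AddMax.
Variables (M : nat) (u : seq nat).
Hypothesis uM : forall x, x \in u -> x < M.

Let Mu : M \notin u. Proof. by apply/negP => /uM; rewrite ltnn. Qed.

Lemma sorted_below_cons b : b \in u -> sorted_below (M :: u) b = sorted_below u b.
Proof.
move=> bu; have bM := uM bu.
rewrite /sorted_below /start_at /= gtn_eqF // /rot /= filter_cat /= ltnNge (ltnW bM) /=.
by rewrite -filter_cat.
Qed.

Lemma sorted_below_cons_max : sorted_below (M :: u) M = pairwise R u.
Proof.
rewrite /sorted_below /start_at /= eqxx rot0 /= ltnn.
by congr pairwise; apply/all_filterP/allP.
Qed.

Lemma avoiding_cons b u' : u = b :: u' -> uniq u ->
  avoiding (M :: u) = avoiding u && sorted_below u b.
Proof.
move=> Eu uu; have bu : b \in u by rewrite Eu mem_head.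
have lu : last b u' \in u by rewrite Eu mem_last.
have aM a : a \in u -> a != M by move/uM; rewrite neq_ltn => ->.
have nM : next (M :: u) M = b by rewrite Eu /= eqxx.
have nL : next (M :: u) (last b u') = M.
  by rewrite Eu; apply: (next_last (y := M)); rewrite -Eu /= Mu.
have nL' : next u (last b u') = b by rewrite Eu next_last // -Eu.
have nO a : a \in u -> a != last b u' -> next (M :: u) a = next u a.
  by move=> au al; rewrite Eu next_cons_other ?aM.
rewrite {1}/avoiding; set f := fun a => _; rewrite [all f _]/= {1}/f nM (uM bu) implyTb.
rewrite sorted_below_cons // /avoiding /f.
apply/andP/andP => [[H1 /allP H2]|[/allP H1 H2]]; split => //; apply/allP => a au.
- have [->|al] := eqVneq a (last b u'); first by rewrite nL' H1 implybT.
  by have := H2 a au; rewrite nO // sorted_below_cons // mem_next.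
- have [->|al] := eqVneq a (last b u'); first by rewrite nL ltnNge ltnW // uM.
  by rewrite nO // sorted_below_cons ?mem_next //; apply: H1.
Qed.

End AddMax.

Lemma pairwise_sorted_below v b : uniq v -> b \in v -> pairwise R v -> sorted_below v b.
Proof.
move=> uv bv; rewrite /sorted_below {1}(start_at_head bv) /= ltnn filter_cat.
have {1}-> : v = take (index b v) v ++ b :: drop (index b v).+1 v.
  by rewrite -{1}(cat_take_drop (index b v) v) (drop_nth 0) ?index_mem ?nth_index.
move: (take _ v) (drop _ v) => A B; rewrite !pairwise_cat /= => /and3P[AbB pA /andP[bB pB]].
rewrite !pairwise_filter // andbT.
have nil_below (C : seq nat) : {in C, forall c, b < c} -> [seq c <- C | c < b] = [::].
  by move=> Cb; rewrite (eq_in_filter (a2 := pred0)) ?filter_pred0 // => c /Cb /=; lia.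
move: AbB bB; rewrite /dirlt; case: up => [_ /allP Bb | /allrelP Ab _].
  by rewrite nil_below.
by rewrite [X in allrel _ _ X]nil_below ?allrel0r // => c cA; apply: Ab; rewrite ?mem_head.
Qed.

Lemma cyc_sorted_sorted_below w b : uniq w -> cyc_sorted w -> b \in w -> sorted_below w b.
Proof.
move=> uw /hasP[b0 b0w Hp] bw.
rewrite -(sorted_below_rot (index b0 w) uw bw).
by apply: pairwise_sorted_below; rewrite ?rot_uniq ?mem_rot.
Qed.

Lemma sorted_from_inj w b1 b2 : uniq w -> b1 \in w -> b2 \in w ->
  sorted_from w b1 -> sorted_from w b2 -> b1 = b2.
Proof.
move=> uw b1w b2w H1 H2.
have E : start_at b1 w = start_at b2 w.
  apply: (irr_sorted_eq dirlt_trans dirlt_irr); rewrite ?pairwise_sorted //.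
  by move=> x; rewrite !mem_start_at.
by move: E; rewrite !start_at_head // => -[].
Qed.

Lemma count_sorted_from w : uniq w -> cyc_sorted w -> count (sorted_from w) w = 1.
Proof.
move=> uw spw; have /hasP[b0 b0w Hp] := spw.
rewrite (eq_in_count (a2 := pred1 b0)) ?count_uniq_mem ?b0w // => b bw /=.
by apply/idP/eqP => [H|->//]; exact: sorted_from_inj H Hp.
Qed.

Lemma cyc_sorted_cons M u : uniq u -> (forall x, x \in u -> x < M) -> u != [::] ->
  cyc_sorted (M :: u) = pairwise R u.
Proof.
move=> uu uM un0; apply/idP/idP => [spMu | pu].
  have Mu : M \notin u by apply/negP => /uM; rewrite ltnn.
  by rewrite -(sorted_below_cons_max uM) cyc_sorted_sorted_below ?mem_head //= Mu.
move: uM pu; rewrite /cyc_sorted /sorted_from /dirlt.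
case: u un0 {uu} => // b u' _; case: up => uM pu; apply/hasP.
  exists b; first by rewrite !inE eqxx orbT.
  rewrite /start_at /= gtn_eqF ?uM ?mem_head //= eqxx rot1_cons pairwise_rcons pu andbT.
  by apply/allP => x xu; rewrite uM.
exists M; first exact: mem_head.
by rewrite /start_at /= eqxx rot0 pairwise_cons pu andbT; apply/allP => x /uM.
Qed.

Lemma sorted_below_nth w b p q : sorted_below w b -> p < q < size w ->
  nth 0 (start_at b w) p < b -> nth 0 (start_at b w) q < b ->
  R (nth 0 (start_at b w) p) (nth 0 (start_at b w) q).
Proof.
rewrite /sorted_below pairwise_filterE => /(pairwiseP 0) H /andP[pq qw] /= pb qb.
by have := H p q; rewrite !inE /= size_rot pb qb /=; apply => //; apply: ltn_trans qw.
Qed.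

Lemma sorted_belowPn w b : ~~ sorted_below w b -> exists p q,
  [/\ p < q < size w, nth 0 (start_at b w) p < b, nth 0 (start_at b w) q < b
     & ~~ R (nth 0 (start_at b w) p) (nth 0 (start_at b w) q)].
Proof.
rewrite /sorted_below pairwise_filterE => /(pairwisePn 0)[p [q [pqw]]] /=.
by rewrite size_rot in pqw; rewrite !negb_imply => /and3P[pb qb nR]; exists p, q.
Qed.

Lemma lin_occurrence_rot w r : uniq w -> lin_occurrence (rot r w) -> ~~ avoiding w.
Proof.
move=> uw [i [j [l [/andP[ij jl] lv desc /andP[jb lb] nR]]]].
set v := rot r w in lv desc jb lb nR.
have uv : uniq v by rewrite rot_uniq.
have hi : i.+1 < size v := ltn_trans ij (ltn_trans jl lv).
have inw k : k < size v -> nth 0 v k \in w by move=> kv; rewrite -(mem_rot r) mem_nth.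
have nxt : next w (nth 0 v i) = nth 0 v i.+1 by rewrite -(next_rot r uw) next_nth_uniq.
apply/allPn; exists (nth 0 v i); first by apply: inw; lia.
rewrite nxt desc /=; apply/negP => H.
have Eu : start_at (nth 0 v i.+1) w = rot i.+1 v.
  by rewrite -(start_at_rot r uw) ?inw // /start_at index_uniq.
have Ej : j - i.+1 + i.+1 = j := subnK (ltnW ij).
have El : l - i.+1 + i.+1 = l := subnK (ltnW (ltn_trans ij jl)).
have := sorted_below_nth (p := j - i.+1) (q := l - i.+1) H.
rewrite Eu !(nth_rot_lt 0 (r := i.+1)) ?Ej ?El ?(ltn_trans jl lv) //.
have jlw : j - i.+1 < l - i.+1 < size w.
  rewrite ltn_sub2r ?(ltn_trans ij jl) //= -(size_rot r w).
  exact: leq_ltn_trans (leq_subr _ _) lv.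
by move/(_ jlw jb lb); apply/negP.
Qed.

Lemma not_avoiding_lin_occurrence w : uniq w -> ~~ avoiding w ->
  exists2 a, a \in w & lin_occurrence (start_at a w).
Proof.
move=> uw /allPn[a aw]; rewrite negb_imply => /andP[ba /sorted_belowPn[p [q []]]].
set b := next w a in ba *; move=> pqw pb qb nR.
have bw : b \in w by rewrite mem_next.
exists a => //; set v := start_at a w.
have uv : uniq v by rewrite rot_uniq.
have sv : size v = size w := size_rot _ _.
have v0 : nth 0 v 0 = a by rewrite /v start_at_head.
have sw : 1 < size v.
  rewrite sv (@uniq_leq_size _ [:: b; a]) //= ?inE ?ltn_eqF ?andbT //.
  by apply/allP; rewrite /= aw bw.
have v1 : nth 0 v 1 = b by rewrite -(next_nth_uniq 0 (i := 0)) // v0 /v /start_at next_rot.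
have Eu : start_at b w = rot 1 v.
  by rewrite -(start_at_rot (index a w) uw bw) -/v /start_at -v1 index_uniq.
rewrite Eu in pb qb nR.
have shift k : k < size w -> nth 0 (rot 1 v) k < b ->
    k.+1 < size v /\ nth 0 (rot 1 v) k = nth 0 v k.+1.
  move=> kw; rewrite -sv in kw; rewrite nth_rot ?(ltnW sw) //.
  case: (ltnP k (size v - 1)) => [lt | ge].
    by rewrite addn1; split => //; rewrite -[k.+1]add1n -ltn_subRL.
  rewrite (_ : k - _ = 0) ?v0; last by apply/eqP; rewrite subn_eq0 leq_subRL ?add1n // ltnW.
  by move=> ab; move: ba; rewrite ltnNge ltnW.
have [p1 Ep] := shift p (ltn_trans (proj1 (andP pqw)) (proj2 (andP pqw))) pb.
have [q1 Eq] := shift q (proj2 (andP pqw)) qb.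
rewrite Ep Eq in pb qb nR.
have p0 : 0 < p by case: (p) pb => //; rewrite v1 ltnn.
exists 0, p.+1, q.+1; split; rewrite ?v0 ?v1 //; last by rewrite pb qb.
by rewrite !ltnS p0 /=; case/andP: pqw.
Qed.

End CyclicWords.

Section Insertion.
Variables (up : bool) (M b : nat) (w : seq nat).
Hypotheses (uw : uniq w) (wM : forall x, x \in w -> x < M) (bw : b \in w).

Let u := start_at b w.
Let Eu : u = b :: (drop (index b w).+1 w ++ take (index b w) w). Proof. exact: start_at_head. Qed.
Let uu : uniq u. Proof. by rewrite rot_uniq. Qed.
Let uM : forall x, x \in u -> x < M. Proof. by move=> x; rewrite mem_rot; apply: wM. Qed.
Let uMu : uniq (M :: u). Proof. by rewrite /= uu andbT; apply/negP => /uM; rewrite ltnn. Qed.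

Lemma avoiding_insert : avoiding up (insert_before M b w) = avoiding up w && sorted_below up w b.
Proof.
have [k _ ->] := insert_beforeE M bw.
by rewrite avoiding_rot // (avoiding_cons up uM Eu) // avoiding_rot // sorted_below_rot.
Qed.

Lemma slots_insert : slots up (insert_before M b w) = slots up w + sorted_from up w b.
Proof.
have [k _ ->] := insert_beforeE M bw.
rewrite slots_rot // {1}/slots /= sorted_below_cons_max // addnC; congr (_ + _).
rewrite (eq_in_count (a2 := sorted_below up u)) => [|x xu]; last exact: sorted_below_cons.
exact: slots_rot.
Qed.

Lemma cyc_sorted_insert : cyc_sorted up (insert_before M b w) = sorted_from up w b.
Proof.
have [k _ ->] := insert_beforeE M bw.
by rewrite cyc_sorted_rot // cyc_sorted_cons // -/u Eu.
Qed.

Lemma next_insert : next (insert_before M b w) M = b.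
Proof.
have [k _ ->] := insert_beforeE M bw.
by rewrite next_rot // -/u Eu /= eqxx.
Qed.

End Insertion.

(** * Counting representatives *)

Section Representatives.
Variable up : bool.

(* One word per avoiding cyclic class: the rotation starting with 0, the complement of the
   maximum. *)
Definition reps M := [seq w <- permutations (iota 0 M) | (head 0 w == 0) && avoiding up w].

Lemma mem_reps M w : (w \in reps M) = [&& head 0 w == 0, avoiding up w & perm_eq w (iota 0 M)].
Proof. by rewrite mem_filter mem_permutations andbA. Qed.

Definition extensions M w := [seq insert_before M b w | b <- w & sorted_below up w b].

Lemma extensions_reps M w L : 0 < M -> w \in reps M -> L \in extensions M w -> L \in reps M.+1.
Proof.
move=> M0; rewrite mem_reps => /and3P[hw aw pw] /mapP[b]; rewrite mem_filter => /andP[sb bw] ->.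
have uw := perm_iota_uniq pw.
have wM x : x \in w -> x < M by rewrite (perm_iota_mem pw).
rewrite mem_reps perm_iota_insert_before // avoiding_insert // aw sb head_insert_before ?hw //.
by apply: contraTneq bw => ->.
Qed.

Lemma reps_extensions M L : 0 < M -> L \in reps M.+1 ->
  exists2 w, w \in reps M & L \in extensions M w.
Proof.
move=> M0; rewrite mem_reps => /and3P[hL aL pL].
have uL := perm_iota_uniq pL.
have ML : M \in L by rewrite (perm_iota_mem pL).
have hLM : head M L != M.
  by case: (L) ML hL => //= x s _ /eqP ->; rewrite eq_sym -lt0n.
have [bw EL] := insert_before_next uL ML hLM.
set w := filter (predC1 M) L in bw EL; set b := next L M in bw EL.
have pw : perm_eq w (iota 0 M).
  rewrite /w (permPl (perm_filter _ pL)) -addn1 iotaD add0n cats1 filter_rcons /= eqxx /=.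
  rewrite (eq_in_filter (a2 := predT)) ?filter_predT // => x; rewrite mem_iota /=; lia.
have wM x : x \in w -> x < M by rewrite (perm_iota_mem pw).
have /andP[aw sb] : avoiding up w && sorted_below up w b.
  by rewrite -(avoiding_insert up (perm_iota_uniq pw) wM bw) EL.
exists w; last by apply/mapP; exists b => //; rewrite mem_filter sb.
rewrite mem_reps aw pw andbT /w.
by case: (L) hL => //= x s /eqP ->; rewrite (ltn_eqF M0).
Qed.

Lemma perm_reps_succ M : 0 < M -> perm_eq (reps M.+1) (flatten (map (extensions M) (reps M))).
Proof.
move=> M0; apply: uniq_perm; first exact/filter_uniq/permutations_uniq.
- apply: (@uniq_flatten_map _ _ _ _ (filter (predC1 M))).
  + exact/filter_uniq/permutations_uniq.
  + move=> w; rewrite mem_reps => /and3P[_ _ pw].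
    have uw := perm_iota_uniq pw.
    have wM x : x \in w -> x < M by rewrite (perm_iota_mem pw).
    rewrite map_inj_in_uniq ?filter_uniq // => b1 b2.
    rewrite !mem_filter => /andP[_ b1w] /andP[_ b2w] E.
    by rewrite -(next_insert uw wM b1w) E (next_insert uw wM b2w).
  + move=> w; rewrite mem_reps => /and3P[_ _ pw] _ /mapP[b _ ->].
    by apply: filter_insert_before; rewrite (perm_iota_mem pw) ltnn.
move=> L; apply/idP/flatten_mapP => [/(reps_extensions M0) // | [w]].
exact: extensions_reps.
Qed.

End Representatives.

Section Counting.
Variable up : bool.
Local Notation reps := (reps up).
Local Notation unsorted_with k := (fun w => ~~ cyc_sorted up w && (slots up w == k)).

Lemma count_reps_succ M (Q : pred (seq nat)) : 0 < M -> count Q (reps M.+1) =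
  sumn [seq count (fun b => sorted_below up w b && Q (insert_before M b w)) w | w <- reps M].
Proof.
move=> M0; rewrite (seq.permP (perm_reps_succ up M0)) count_flatten -map_comp; congr sumn.
apply: eq_map => w /=; rewrite count_map count_filter; apply: eq_count => b /=.
by rewrite andbC.
Qed.

Section Extensions.
Variables (M : nat) (w : seq nat).
Hypothesis pw : perm_eq w (iota 0 M).

Let uw : uniq w := perm_iota_uniq pw.
Let wM x : x \in w -> x < M. Proof. by rewrite (perm_iota_mem pw). Qed.

Lemma count_cyc_sorted_extensions :
  count (fun b => sorted_below up w b && cyc_sorted up (insert_before M b w)) w = cyc_sorted up w.
Proof.
rewrite (eq_in_count (a2 := fun b => sorted_below up w b && sorted_from up w b)) => [|b bw];
  last by rewrite cyc_sorted_insert.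
have [spw | nspw] /= := boolP (cyc_sorted up w).
  rewrite (eq_in_count (a2 := sorted_from up w)) ?count_sorted_from // => b bw /=.
  by rewrite cyc_sorted_sorted_below.
rewrite (eq_in_count (a2 := pred0)) ?count_pred0 // => b bw /=; apply/negbTE.
by apply: contra nspw => /andP[_ sfb]; apply/hasP; exists b.
Qed.

Lemma count_unsorted_extensions k :
  count (fun b => sorted_below up w b && unsorted_with k (insert_before M b w)) w =
  unsorted_with k w * k + cyc_sorted up w * ((M == k) * (M - 1)).
Proof.
rewrite (eq_in_count (a2 := fun b =>
    [&& sorted_below up w b, ~~ sorted_from up w b & slots up w + sorted_from up w b == k]))
  => [|b bw]; last by rewrite cyc_sorted_insert // slots_insert.
have [spw | nspw] /= := boolP (cyc_sorted up w).
  have sw : slots up w = M.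
    rewrite /slots (eq_in_count (a2 := predT)) ?count_predT ?(perm_iota_size pw) // => b bw.
    exact: cyc_sorted_sorted_below.
  rewrite sw (eq_in_count (a2 := fun b => (M == k) && ~~ sorted_from up w b)) => [|b bw].
    have [_|] := eqVneq M k; last by rewrite count_pred0.
    have := count_predC (sorted_from up w) w.
    rewrite count_sorted_from // (perm_iota_size pw) => <-.
    by rewrite mul0n add0n !mul1n add1n subn1.
  by rewrite cyc_sorted_sorted_below //=; case: (sorted_from up w b); rewrite ?andbF ?addn0 ?andbT.
rewrite (eq_in_count (a2 := fun b => (slots up w == k) && sorted_below up w b)) => [|b bw].
  by rewrite addn0; case: eqP => [<-|_] /=; rewrite ?count_pred0 ?mul1n.
have -> : sorted_from up w b = false.
  by apply/negbTE; apply: contra nspw => sfb; apply/hasP; exists b.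
by rewrite addn0 /= andbC.
Qed.

End Extensions.

Lemma reps1 : reps 1 = [:: [:: 0]].
Proof. by []. Qed.

Lemma count_cyc_sorted_reps M : 0 < M -> count (cyc_sorted up) (reps M) = 1.
Proof.
elim: M => [|[|M] IH] // _; rewrite count_reps_succ // -[RHS]IH // -sumn_count.
congr sumn; apply/eq_in_map => w; rewrite mem_reps => /and3P[_ _ pw].
exact: count_cyc_sorted_extensions.
Qed.

Lemma count_unsorted_reps M k : 0 < M ->
  count (unsorted_with k) (reps M) = if k < M then (k - 1) * k ^ (M - 1 - k) else 0.
Proof.
elim: M k => [|[|M] IH] k // _; first by rewrite reps1 /=; case: k.
have -> : count (unsorted_with k) (reps M.+2) =
    count (unsorted_with k) (reps M.+1) * k + count (cyc_sorted up) (reps M.+1) * ((M.+1 == k) * M).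
  rewrite count_reps_succ // -sumn_count2; congr sumn; apply/eq_in_map => w.
  by rewrite mem_reps => /and3P[_ _ pw]; rewrite count_unsorted_extensions // subn1.
rewrite IH // count_cyc_sorted_reps // mul1n.
case: (ltngtP k M.+1) => [lt | gt | ->].
- rewrite ltnW // mul0n addn0 -mulnA -expnSr; congr (_ * _ ^ _); lia.
- by rewrite ltnNge gt.
- by rewrite ltnSn mul0n add0n mul1n !subn1 /= subnn muln1.
Qed.

Lemma size_reps n : 0 < n ->
  size (reps n) = (1 + \sum_(0 <= i < n.-1) i * (i.+1) ^ (n - i - 2))%N.
Proof.
move=> n0; rewrite -(count_predC (cyc_sorted up)) count_cyc_sorted_reps //; congr (_ + _).
rewrite (@count_partition _ _ _ (slots up) n.+1) => [|w]; last first.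
  by rewrite mem_reps ltnS => /and3P[_ _ pw]; rewrite -(perm_iota_size pw) count_size.
rewrite big_ord_recr /= count_unsorted_reps // ltnn addn0.
rewrite (eq_bigr (fun k : 'I_n => (k - 1) * k ^ (n - 1 - k))) => [|k _]; last first.
  by rewrite count_unsorted_reps // ltn_ord.
case: n n0 => // n _; rewrite big_ord_recl /= big_mkord; apply: eq_bigr => i _.
by rewrite /bump /= add1n subn1 /=; congr (_ * _ ^ _); lia.
Qed.

End Counting.

(** * Cyclic permutations *)

Section ComplementWord.
Variable n : nat.
Implicit Types s t : 'S_n.

Definition cword (s : 'S_n) : seq nat := [seq n.-1 - s i | i <- enum 'I_n].

Lemma size_cword s : size (cword s) = n.
Proof. by rewrite size_map size_enum_ord. Qed.

Lemma nth_cword s (x : 'I_n) : nth 0 (cword s) x = n.-1 - s x.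
Proof.
rewrite /cword (nth_map x) ?size_enum_ord //; congr (_ - nat_of_ord (s _)).
by apply: ord_inj; rewrite /= nth_enum_ord.
Qed.

Lemma cword_inj : injective cword.
Proof.
move=> s t E; apply/permP => i; apply: ord_inj.
have := congr1 (nth 0 ^~ i) E; rewrite /= !nth_cword.
by have := ltn_ord (s i); have := ltn_ord (t i); lia.
Qed.

Lemma perm_iota_cword s : perm_eq (cword s) (iota 0 n).
Proof.
apply: uniq_perm; rewrite ?iota_uniq //.
  rewrite map_inj_uniq ?enum_uniq // => i j E; apply: (@perm_inj _ s); apply: ord_inj.
  by move: E; have := ltn_ord (s i); have := ltn_ord (s j); lia.
move=> x; rewrite mem_iota add0n; apply/mapP/idP => [[i _ ->] | xn].
  by have := ltn_ord i; lia.
have hx : n.-1 - x < n by lia.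
by exists ((s^-1)%g (Ordinal hx)); rewrite ?mem_enum // permKV /=; lia.
Qed.

Lemma cword_surj L : perm_eq L (iota 0 n) -> exists s, cword s = L.
Proof.
move=> pL; have uL := perm_iota_uniq pL; have sL := perm_iota_size pL.
have Lb (i : 'I_n) : nth 0 L i < n by rewrite -(perm_iota_mem pL) mem_nth // sL.
have hlt (i : 'I_n) : n.-1 - nth 0 L i < n by have := ltn_ord i; lia.
have f_inj : injective (fun i => Ordinal (hlt i)).
  move=> i j /(congr1 val) /= E; apply: ord_inj; apply/eqP.
  rewrite -(nth_uniq 0 _ _ uL) ?sL //; apply/eqP.
  by move: E (Lb i) (Lb j); move: (nth 0 L i) (nth 0 L j) => a b; lia.
exists (perm f_inj); apply: (@eq_from_nth _ 0); first by rewrite size_cword sL.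
rewrite size_cword => j jn; rewrite (nth_cword _ (Ordinal jn)) permE /=.
by have := Lb (Ordinal jn); rewrite /=; lia.
Qed.

Lemma cshiftX k (j : 'I_n) : (cshift n ^+ k)%g j = (j + k) %% n :> nat.
Proof.
elim: k j => [|k IH] j; first by rewrite expg0 perm1 addn0 modn_small.
rewrite expgSr permM /cshift permE /= IH -[((j + k) %% n).+1]addn1 modnDml.
by rewrite addn1 addnS.
Qed.

Lemma rotpE k s (j : 'I_n) : rotp k s j = s ((cshift n ^+ k)%g j).
Proof. by rewrite /rotp permM. Qed.

Lemma rotpD a b s : rotp a (rotp b s) = rotp (a + b) s.
Proof. by rewrite /rotp mulgA expgD. Qed.

Lemma rotp0 s : rotp 0 s = s.
Proof. by rewrite /rotp expg0 mul1g. Qed.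

Lemma rotp_mod a s : 0 < n -> rotp a s = rotp (a %% n) s.
Proof.
move=> n0; have cshift_n : (cshift n ^+ n = 1)%g.
  by apply/permP => j; apply: ord_inj; rewrite perm1 cshiftX modnDr modn_small.
by rewrite {1}(divn_eq a n) /rotp expgD mulnC expgM cshift_n expg1n mul1g.
Qed.

Lemma cword_rotp k s : k < n -> cword (rotp k s) = rot k (cword s).
Proof.
move=> kn; apply: (@eq_from_nth _ 0); first by rewrite size_rot !size_cword.
rewrite size_cword => j jn; rewrite nth_rot ?size_cword ?(ltnW kn) //.
have hj : (if j < n - k then j + k else j - (n - k)) < n by case: ifP; lia.
rewrite (nth_cword s (Ordinal hj)) (nth_cword _ (Ordinal jn)) rotpE.
congr (_ - nat_of_ord (s _)); apply: ord_inj; rewrite cshiftX /=.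
case: ltnP => h; first by rewrite modn_small //; lia.
by rewrite (_ : j + k = j - (n - k) + n) ?modnDr ?modn_small //; lia.
Qed.

End ComplementWord.

Definition pat (up : bool) : seq nat := if up then [:: 0; 1; 2; 3] else [:: 0; 1; 3; 2].

Lemma p1234E (a : 'I_4) : p1234 a = nth 0 (pat true) a :> nat.
Proof. by rewrite /p1234 perm1; case: a => [[|[|[|[|a]]]] Ha]. Qed.

Lemma p1243E (a : 'I_4) : p1243 a = nth 0 (pat false) a :> nat.
Proof. by case: a => [[|[|[|[|a]]]] Ha] //; rewrite /p1243 permE /= -!val_eqE /= ?inordK. Qed.

Lemma ltn_compl n x y : x < n -> y < n -> (n.-1 - x < n.-1 - y) = (y < x).
Proof. lia. Qed.

Lemma pattern_order up (q0 q2 q3 v0 v1 v2 v3 : nat) (a b : 'I_4) :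
  q0.+1 < q2 < q3 -> v0 < v1 -> v1 < v2 -> v1 < v3 -> (if up then v2 < v3 else v3 < v2) ->
  let q := [:: q0; q0.+1; q2; q3] in let v := [:: v0; v1; v2; v3] in
  [&& (a < b) ==> (nth 0 q a < nth 0 q b),
      (nth 0 (pat up) a < nth 0 (pat up) b) == (nth 0 v a < nth 0 v b) &
      adj12 a && (b == a.+1 :> nat) ==> (nth 0 q b == (nth 0 q a).+1)].
Proof.
move=> q023 h01 h12 h13 h23 /=.
by case: a b => [[|[|[|[|a]]]] Ha] // [[|[|[|[|b]]]] Hb] //; case: up h23 => /= h23; lia.
Qed.

Section PatternContainment.
Variables (n : nat) (up : bool) (p : 'S_4).
Hypothesis pE : forall a : 'I_4, p a = nth 0 (pat up) a :> nat.

Lemma vcontains_lin_occurrence (t : 'S_n) : vcontains t p adj12 -> lin_occurrence up (cword t).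
Proof.
case/existsP => f /and3P[/forallP inc /forallP iso /forallP adj].
pose o0 : 'I_4 := @Ordinal 4 0 isT; pose o1 : 'I_4 := @Ordinal 4 1 isT.
pose o2 : 'I_4 := @Ordinal 4 2 isT; pose o3 : 'I_4 := @Ordinal 4 3 isT.
have I12 : f o1 < f o2 := implyP (forallP (inc o1) o2) isT.
have I23 : f o2 < f o3 := implyP (forallP (inc o2) o3) isT.
have A01 : f o1 = (f o0).+1 :> nat := eqP (implyP (forallP (adj o0) o1) isT).
have O01 := eqP (forallP (iso o0) o1); have O12 := eqP (forallP (iso o1) o2).
have O13 := eqP (forallP (iso o1) o3); have O23 := eqP (forallP (iso o2) o3).
rewrite !pE in O01 O12 O13 O23.
exists (f o0), (f o2), (f o3).
rewrite -A01 size_cword !nth_cword /dirlt !ltn_compl ?ltn_ord // I12 I23 -O01 -O12 -O13.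
case: up pE O23 => _ O23; split => //; first by rewrite -leqNgt ltnW // -O23.
by rewrite -O23.
Qed.

Lemma lin_occurrence_vcontains (t : 'S_n) : lin_occurrence up (cword t) -> vcontains t p adj12.
Proof.
case=> i [j [l [ijl]]]; rewrite size_cword => ln desc /andP[jb lb] nR.
have hi : i < n by lia.
have hi1 : i.+1 < n by lia.
have hj : j < n by lia.
pose x0 := Ordinal hi; pose x1 := Ordinal hi1; pose x2 := Ordinal hj; pose x3 := Ordinal ln.
move: desc jb lb nR.
rewrite (nth_cword t x0) (nth_cword t x1) (nth_cword t x2) (nth_cword t x3) /dirlt.
rewrite !ltn_compl ?ltn_ord // => h01 h12 h13 nR.
have d23 : (t x2 == t x3 :> nat) = false.
  by rewrite val_eqE (inj_eq perm_inj) -val_eqE /= ltn_eqF // (proj2 (andP ijl)).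
have h23 : if up then t x2 < t x3 else t x3 < t x2.
  by case: up nR => /=; rewrite -leqNgt leq_eqVlt ?d23 // eq_sym d23.
pose f := [ffun a : 'I_4 => nth x0 [:: x0; x1; x2; x3] a].
have fq (a : 'I_4) : f a = nth 0 [:: i; i.+1; j; l] a :> nat.
  by rewrite ffunE; case: a => [[|[|[|[|a]]]] Ha].
have ft (a : 'I_4) : t (f a) = nth 0 [seq nat_of_ord (t x) | x <- [:: x0; x1; x2; x3]] a :> nat.
  by rewrite ffunE; case: a => [[|[|[|[|a]]]] Ha].
apply/existsP; exists f; apply/and3P.
split; apply/forallP => a; apply/forallP => b; rewrite ?fq ?ft ?pE;
  by case/and3P: (pattern_order a b ijl h01 h12 h13 h23).
Qed.

End PatternContainment.

Definition max_first_avoiders (up : bool) (n : nat) : {set 'S_n} :=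
  [set s | (head 0 (cword s) == 0) && avoiding up (cword s)].

Section CyclicClasses.
Variables (n : nat) (up : bool) (p : 'S_4).
Hypotheses (n1 : 1 < n) (pE : forall a : 'I_4, p a = nth 0 (pat up) a :> nat).
Implicit Types s t : 'S_n.

Let n0 : 0 < n. Proof. exact: ltnW. Qed.

Lemma cyc_containsE s : cyc_contains s p adj12 = ~~ avoiding up (cword s).
Proof.
have uw : uniq (cword s) := perm_iota_uniq (perm_iota_cword s).
apply/existsP/idP => [[r] | /(not_avoiding_lin_occurrence uw)[a aw occ]].
  by move/(vcontains_lin_occurrence pE); rewrite cword_rotp //; apply: lin_occurrence_rot.
have ra : index a (cword s) < n by rewrite -[X in _ < X](size_cword s) index_mem.
by exists (Ordinal ra); apply: (lin_occurrence_vcontains pE); rewrite cword_rotp.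
Qed.

Lemma cyc_rotp k s : k < n -> cyc (rotp k s) = cyc s.
Proof.
move=> kn; apply/setP => X; apply/imsetP/imsetP => [[j _ ->] | [j _ ->]].
  by exists (Ordinal (ltn_pmod (j + k) n0)); rewrite // rotpD (rotp_mod _ _ n0).
exists (Ordinal (ltn_pmod (j + (n - k)) n0)) => //.
rewrite rotpD [RHS](rotp_mod _ _ n0) /= modnDml -addnA subnK ?(ltnW kn) //.
by rewrite modnDr modn_small.
Qed.

Lemma cycAvE : cycAv n p adj12 = @cyc n @: max_first_avoiders up n.
Proof.
apply/setP => X; apply/imsetP/imsetP => [[s] | [s]].
  rewrite inE cyc_containsE negbK => as0 ->.
  have uw : uniq (cword s) := perm_iota_uniq (perm_iota_cword s).
  have z : 0 \in cword s by rewrite (perm_iota_mem (perm_iota_cword s)).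
  have kn : index 0 (cword s) < n by rewrite -[X in _ < X](size_cword s) index_mem.
  exists (rotp (index 0 (cword s)) s); last by rewrite cyc_rotp.
  by rewrite inE cword_rotp // avoiding_rot // as0 andbT -/(start_at _ _) start_at_head.
by rewrite inE => /andP[_ as0] ->; exists s => //; rewrite inE cyc_containsE negbK.
Qed.

Lemma cyc_inj_max_first : {in max_first_avoiders up n &, injective (@cyc n)}.
Proof.
move=> s t; rewrite !inE => /andP[hs _] /andP[ht _] Est.
have : t \in cyc t by apply/imsetP; exists (Ordinal n0) => //; rewrite rotp0.
rewrite -Est => /imsetP[k _ Ek].
have uw : uniq (cword s) := perm_iota_uniq (perm_iota_cword s).
have k0 : nat_of_ord k = 0.
  move: ht; rewrite Ek cword_rotp // -nth0 nth_rot_lt ?size_cword ?add0n // => /eqP E.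
  by apply/eqP; rewrite -(nth_uniq 0 _ _ uw) ?size_cword // E nth0 (eqP hs).
by rewrite Ek (_ : k = Ordinal n0) ?rotp0 //; apply: ord_inj.
Qed.

Lemma card_max_first_avoiders : #|max_first_avoiders up n| = size (reps up n).
Proof.
rewrite cardE -(size_map (@cword n)); apply: perm_size; apply: uniq_perm.
- by rewrite map_inj_uniq ?enum_uniq //; exact: cword_inj.
- exact/filter_uniq/permutations_uniq.
move=> L; rewrite mem_reps; apply/mapP/idP => [[s] | /and3P[h a pL]].
  by rewrite mem_enum inE => /andP[h a] ->; rewrite h a perm_iota_cword.
by have [s Es] := cword_surj pL; exists s => //; rewrite mem_enum inE Es h a.
Qed.

Lemma card_cycAv : #|cycAv n p adj12| = size (reps up n).
Proof. by rewrite cycAvE card_in_imset ?card_max_first_avoiders //; exact: cyc_inj_max_first. Qed.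

End CyclicClasses.

Theorem theorem5p4 (n : nat) (hn : 2 <= n) :
  #|cycAv n p1234 adj12| = (1 + \sum_(0 <= i < n.-1) i * (i.+1) ^ (n - i - 2))%N /\
  #|cycAv n p1243 adj12| = (1 + \sum_(0 <= i < n.-1) i * (i.+1) ^ (n - i - 2))%N.
Proof.
have n0 : 0 < n by apply: ltnW.
by rewrite (card_cycAv hn p1234E) (card_cycAv hn p1243E) !size_reps.
Qed.
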